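(* Consider the multi-queue bandit described in the context, with any problem instance $(\boldsymbol\lambda,\boldsymbol\mu)$ with a unique optimal matching, any $\alpha\in(0,1)$ and any $\alpha$-consistent policy, and let $D(\boldsymbol\mu)=\frac{\Delta}{\mathrm{KL}\left(\mu_{\min},\frac{\mu_{\max}+1}{2}\right)}$. There exist constants $\tau$ and $C$ such that for any $t>\tau$: (a) $\displaystyle 2\Delta\sum_{u\in[U]}\sum_{k\ne k^*_u}\mathbb{E}[T_{uk}(t)]\ge U(K-1)D(\boldsymbol\mu)\left((1-\alpha)\log t-\log(4KC)\right)$; (b) for any $u\in[U]$, $\displaystyle 2\Delta\sum_{k\ne k^*_u}\mathbb{E}[T_{uk}(t)]\ge(U-1)D(\boldsymbol\mu)\left((1-\alpha)\log t-\log(4KC)\right)$; (c) for any $u\in[U]$, $\displaystyle \Delta\sum_{k\in N}\mathbb{E}[T_{uk}(t)]\ge(K-U)D(\boldsymbol\mu)\left((1-\alpha)\log t-\log(4KC)\right)$, where $N=[K]\setminus\{k^*_1,\dots,k^*_U\}$ is the set of the $K-U$ servers that are optimal for no queue.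
   Context: Discrete-time system with $U$ queues and $K$ servers, $1\le U\le K$. Arrivals $A_u(t)\in\{0,1\}$ to queue $u$ are Bernoulli($\lambda_u$), and the service $R_{uk}(t)\in\{0,1\}$ that server $k$ offers queue $u$ at time $t$ is Bernoulli($\mu_{uk}$); all mutually independent and i.i.d. across slots. In each slot a policy schedules a matching between queues and servers (each server serves at most one queue, each queue at most one server), based only on past observations and independent internal randomness. $\kappa_u(t)$ is the server assigned to queue $u$ at time $t$ and $T_{uk}(t)=\sum_{s=1}^t\mathbf 1\{\kappa_u(s)=k\}$. Unique optimal matching: for each $u$, $\mu^*_u=\max_k\mu_{uk}$ is attained at a unique $k^*_u$, and $k^*_u\ne k^*_{u'}$ for $u\ne u'$; also $\lambda_u<\mu^*_u$. $\Delta=\min_{u,\,k\ne k^*_u}(\mu^*_u-\mu_{uk})$, $\mu_{\min}=\min_{u,k}\mu_{uk}$, $\mu_{\max}=\max_{u,k}\mu_{uk}$, $\mathrm{KL}(p,q)=p\log\frac pq+(1-p)\log\frac{1-p}{1-q}$. A policy is $\alpha$-consistent if for every problem instance satisfying these assumptions, $\mathbb{E}[T_{uk}(t)]=O(t^\alpha)$ for every $u$ and $k\ne k^*_u$. *)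

From mathcomp Require Import all_boot all_order all_algebra.
From mathcomp Require Import reals exp.
Set Implicit Arguments. Unset Strict Implicit. Unset Printing Implicit Defensive.
Import Order.TTheory GRing.Theory Num.Theory.
Local Open Scope ring_scope.

Section MultiQueue.
Variables (R : realType) (U K : nat).

(* A (full) schedule: queue u is served by server f u; a matching means
   f is injective (each server serves at most one queue). *)
Definition sched := {ffun 'I_U -> 'I_K}.
Definition is_matching (f : sched) : bool := injectiveb f.

(* Per-slot observation record:
   (arrivals A(s), schedule kappa(s), observed services R_{u,kappa_u(s)}(s)). *)
Definition rec := ({ffun 'I_U -> bool} * sched * {ffun 'I_U -> bool})%type.

Definition arr (r : rec) := r.1.1.
Definition kap (r : rec) := r.1.2.
Definition obs (r : rec) := r.2.

(* A history is the list of past records, MOST RECENT FIRST. *)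
Definition history := seq rec.

(* A (randomized, history-dependent) policy: given the past history, a
   probability distribution over schedules (matchings) for the current slot. *)
Definition policy := history -> {ffun sched -> R}.

Definition valid_policy (pi : policy) : Prop :=
  (forall h f, 0 <= pi h f) /\
  (forall h, \sum_(f : sched) pi h f = 1) /\
  (forall h f, ~~ is_matching f -> pi h f = 0).

Definition bern (p : R) (b : bool) : R := if b then p else 1 - p.

Definition step (lam : 'I_U -> R) (mu : 'I_U -> 'I_K -> R) (pi : policy)
    (h : history) (r : rec) : R :=
  pi h (kap r) * (\prod_(u < U) bern (lam u) (arr r u))
               * (\prod_(u < U) bern (mu u (kap r u)) (obs r u)).

Fixpoint hprob lam mu pi (h : history) : R :=
  match h with
  | [::] => 1
  | r :: h' => hprob lam mu pi h' * step lam mu pi h' r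
  end.

Definition Tcount (u : 'I_U) (k : 'I_K) (h : history) : nat :=
  count (fun r => kap r u == k) h.

Definition ET lam mu pi (t : nat) (u : 'I_U) (k : 'I_K) : R :=
  \sum_(h : t.-tuple rec) hprob lam mu pi h * (Tcount u k h)%:R.

Definition unique_opt (mu : 'I_U -> 'I_K -> R) (kstar : 'I_U -> 'I_K) : Prop :=
  (forall u k, k != kstar u -> mu u k < mu u (kstar u)) /\ injective kstar.

Definition valid_instance (lam : 'I_U -> R) (mu : 'I_U -> 'I_K -> R) : Prop :=
  (forall u, 0 <= lam u <= 1) /\ (forall u k, 0 <= mu u k <= 1) /\
  exists kstar, unique_opt mu kstar /\ (forall u, lam u < mu u (kstar u)).

Definition consistent (alpha : R) (pi : policy) : Prop :=
  forall lam mu kstar, valid_instance lam mu -> unique_opt mu kstar ->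
  forall u k, k != kstar u ->
  exists c : R, exists t0 : nat, forall t : nat, (t0 <= t)%N ->
    ET lam mu pi t u k <= c * powR (t%:R) alpha.

Definition Delta (mu : 'I_U -> 'I_K -> R) (kstar : 'I_U -> 'I_K) : R :=
  \big[Num.min/1]_(u : 'I_U) \big[Num.min/1]_(k : 'I_K | k != kstar u)
     (mu u (kstar u) - mu u k).

Definition mu_min (mu : 'I_U -> 'I_K -> R) : R :=
  \big[Num.min/1]_(u : 'I_U) \big[Num.min/1]_(k : 'I_K) mu u k.
Definition mu_max (mu : 'I_U -> 'I_K -> R) : R :=
  \big[Num.max/0]_(u : 'I_U) \big[Num.max/0]_(k : 'I_K) mu u k.

(* Bernoulli KL divergence; with ln 0 = 0 this realizes 0 log 0 = 0 *)
Definition KL (p q : R) : R :=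
  p * ln (p / q) + (1 - p) * ln ((1 - p) / (1 - q)).

(* D(mu) = Delta / KL(mu_min, (mu_max+1)/2); when mu_max = 1 the KL is +oo
   and D(mu) = 0. *)
Definition Dmu (mu : 'I_U -> 'I_K -> R) (kstar : 'I_U -> 'I_K) : R :=
  if mu_max mu < 1 then Delta mu kstar / KL (mu_min mu) ((mu_max mu + 1) / 2)
  else 0.

End MultiQueue.

(* Change of measure.  Fix a queue u and a server k <> k*_u.  Exchanging k and
   k*_u in the optimal matching and giving every pair that thereby becomes
   optimal the mean x = (mu_max + 1) / 2 yields an instance mu' whose optimal
   matching sends u to k.  An alpha-consistent policy serves u by k in at least
   t/2 slots with probability O(t^(alpha-1)) under mu, and in fewer than t/2
   slots with probability O(t^(alpha-1)) under mu', so by the data-processing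
   inequality the relative entropy of the two laws of the history is at least
   (1 - alpha) log t - O(1).  That relative entropy is
   sum_(v,j) KL(mu_vj, mu'_vj) E[T_vj(t)], where only the exchanged pairs
   contribute, each at most KL(mu_min, x).  Hence every suboptimal pair (u, k)
   satisfies
     (1 - alpha) log t - log(4KC)
       <= KL(mu_min, x) (E[T_uk] + sum_(v <> u, k*_v = k) E[T_(v, k*_u)]).
   Summing over the servers matched to no queue gives (c); summing over the
   servers of the other queues gives (b), using that in a matching a queue
   never holds a server held by another queue; summing both over all queues
   gives (a). *)

From mathcomp Require Import all_boot all_order all_algebra perm.
From mathcomp Require Import reals sequences exp.
From mathcomp Require Import ring lra zify.
Import Order.TTheory GRing.Theory Num.Theory.
Local Open Scope ring_scope.
Set Implicit Arguments. Unset Strict Implicit. Unset Printing Implicit Defensive.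

Section FiniteSums.
Variable V : nmodType.

Lemma sum_tuple0 (T : finType) (F : 0.-tuple T -> V) :
  \sum_(h : 0.-tuple T) F h = F [tuple].
Proof. by rewrite (big_pred1 [tuple]) // => h /=; rewrite [h]tuple0; apply/esym/eqP. Qed.

Lemma sum_tupleS (T : finType) n (F : n.+1.-tuple T -> V) :
  \sum_(h : n.+1.-tuple T) F h = \sum_(x : T) \sum_(h : n.-tuple T) F [tuple of x :: h].
Proof.
rewrite pair_bigA /= (reindex (fun p : T * n.-tuple T => [tuple of p.1 :: p.2])) //.
exists (fun h : n.+1.-tuple T => (thead h, [tuple of behead h])) => [[x h] _|h _].
  by rewrite /= theadE; congr pair; apply/val_inj.
by rewrite [RHS]tuple_eta; apply/val_inj.
Qed.

End FiniteSums.

Section ProductSums.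
Variables (S : comPzSemiRingType) (I J : finType).

Lemma sum_ffun_prod1 (F : I -> J -> S) :
  (forall i, \sum_j F i j = 1) -> \sum_(a : {ffun I -> J}) \prod_i F i (a i) = 1.
Proof. by move=> F1; rewrite -bigA_distr_bigA big1. Qed.

Lemma sum_ffun_prod_marginal (F : I -> J -> S) (v : I) (G : J -> S) :
  \sum_(a : {ffun I -> J}) (\prod_i F i (a i)) * G (a v) =
  (\sum_j F v j * G j) * \prod_(i | i != v) \sum_j F i j.
Proof.
pose F' i j := if i == v then F i j * G j else F i j.
transitivity (\sum_(a : {ffun I -> J}) \prod_i F' i (a i)).
  apply: eq_bigr => a _; rewrite (bigD1 v) //= [RHS](bigD1 v) //= /F' eqxx mulrAC.
  by congr (_ * _); apply: eq_bigr => i /negbTE ->.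
rewrite -bigA_distr_bigA (bigD1 v) //= /F' eqxx.
by congr (_ * _); apply: eq_bigr => i /negbTE ->.
Qed.

End ProductSums.

Section Bernoulli.
Variable R : realType.
Implicit Types p q : R.

Lemma bern_ge0 p b : 0 <= p <= 1 -> 0 <= bern p b.
Proof. by case: b => /andP[p0 p1] /=; lra. Qed.

Lemma sum_bern p : \sum_b bern p b = 1.
Proof. by rewrite big_bool /=; lra. Qed.

Lemma sum_bern_ln_ratio p q : \sum_b bern p b * ln (bern p b / bern q b) = KL p q.
Proof. by rewrite big_bool. Qed.

Lemma KLxx p : KL p p = 0.
Proof.
have xlnxx (x : R) : x * ln (x / x) = 0.
  by have [->|x0] := eqVneq x 0; rewrite ?mul0r // divff // ln1 mulr0.
by rewrite /KL !xlnxx addr0.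
Qed.

End Bernoulli.

Section Kernel.
Context {R : realType} {U K : nat} {lam : 'I_U -> R} { pi : policy R U K }.
Hypothesis hpi : valid_policy pi.
Hypothesis hlam : forall u, 0 <= lam u <= 1.

Definition obs_prob (mu : 'I_U -> 'I_K -> R) (f : sched U K) (o : {ffun 'I_U -> bool}) :=
  \prod_u bern (mu u (f u)) (o u).

Lemma sum_obs_prob mu f : \sum_o obs_prob mu f o = 1.
Proof. exact: sum_ffun_prod1 (fun u => sum_bern _). Qed.

Lemma sum_step_kap_obs mu h (G : sched U K -> {ffun 'I_U -> bool} -> R) :
  \sum_(r : rec U K) step lam mu pi h r * G (kap r) (obs r) =
  \sum_(f : sched U K) pi h f * \sum_o obs_prob mu f o * G f o.
Proof.
have sum_rec (H : rec U K -> R) : \sum_r H r = \sum_a \sum_f \sum_o H (a, f, o).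
  by rewrite pair_big pair_big; apply: eq_bigr => -[[a f] o].
rewrite sum_rec exchange_big /=; apply: eq_bigr => f _.
transitivity (\sum_(a : {ffun 'I_U -> bool}) (\prod_u bern (lam u) (a u)) *
   (pi h f * \sum_o obs_prob mu f o * G f o)).
  apply: eq_bigr => a _; rewrite !big_distrr; apply: eq_bigr => o _.
  by rewrite /step /obs_prob /=; ring.
by rewrite -big_distrl /= (sum_ffun_prod1 (fun u => sum_bern (lam u))) mul1r.
Qed.

Lemma sum_step mu h : \sum_(r : rec U K) step lam mu pi h r = 1.
Proof.
transitivity (\sum_f pi h f * \sum_o obs_prob mu f o * 1).
  by rewrite -sum_step_kap_obs; apply: eq_bigr => r _; rewrite mulr1.
under eq_bigr do rewrite (eq_bigr _ (fun o _ => mulr1 _)) sum_obs_prob mulr1.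
by case: hpi => _ [].
Qed.

Section Nonneg.
Variable mu : 'I_U -> 'I_K -> R.
Hypothesis hmu : forall u k, 0 <= mu u k <= 1.

Lemma step_ge0 h r : 0 <= step lam mu pi h r.
Proof.
have prod_bern_ge0 (p : 'I_U -> R) b : (forall u, 0 <= p u <= 1) ->
    0 <= \prod_u bern (p u) (b u).
  by move=> hp; apply: prodr_ge0 => u _; apply: bern_ge0.
by rewrite /step !mulr_ge0 ?prod_bern_ge0 //; case: hpi.
Qed.

Lemma hprob_ge0 h : 0 <= hprob lam mu pi h.
Proof. by elim: h => [|r h IH] /=; [exact: ler01 | exact: mulr_ge0 IH (step_ge0 _ _)]. Qed.

Lemma ET_ge0 t u k : 0 <= ET lam mu pi t u k.
Proof. by apply: sumr_ge0 => h _; rewrite mulr_ge0 ?hprob_ge0. Qed.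

End Nonneg.

Lemma sum_hprob mu t : \sum_(h : t.-tuple (rec U K)) hprob lam mu pi h = 1.
Proof.
elim: t => [|t IH]; first by rewrite sum_tuple0.
rewrite sum_tupleS exchange_big /= -[RHS]IH; apply: eq_bigr => h _.
by rewrite -big_distrr /= sum_step mulr1.
Qed.

Lemma expect_additive_eq mu (g1 g2 : rec U K -> R) :
  (forall h, \sum_r step lam mu pi h r * g1 r = \sum_r step lam mu pi h r * g2 r) ->
  forall t, \sum_(h : t.-tuple (rec U K)) hprob lam mu pi h * \sum_(r <- h) g1 r =
            \sum_(h : t.-tuple (rec U K)) hprob lam mu pi h * \sum_(r <- h) g2 r.
Proof.
move=> hg; elim=> [|t IH]; first by rewrite !sum_tuple0 !big_nil.
have unfold_last (g : rec U K -> R) :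
  \sum_(h : t.+1.-tuple (rec U K)) hprob lam mu pi h * \sum_(r <- h) g r =
  \sum_(h : t.-tuple (rec U K)) hprob lam mu pi h * (\sum_r step lam mu pi h r * g r) +
  \sum_(h : t.-tuple (rec U K)) hprob lam mu pi h * \sum_(r <- h) g r.
  rewrite sum_tupleS exchange_big -big_split; apply: eq_bigr => h _ /=.
  set P := hprob lam mu pi h.
  transitivity (\sum_r (P * (step lam mu pi h r * g r) +
                        P * (\sum_(r0 <- h) g r0) * step lam mu pi h r)).
    by apply: eq_bigr => r _; rewrite big_cons; ring.
  by rewrite big_split /= -!big_distrr /= sum_step mulr1.
by rewrite !unfold_last IH; congr (_ + _); apply: eq_bigr => h _; rewrite hg.
Qed.

Lemma sum_Tcount u (h : history U K) : (\sum_j Tcount u j h)%N = size h.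
Proof.
elim: h => [|r h IH]; first by rewrite big1.
rewrite /Tcount /= big_split /= -/(Tcount _ _ _) IH (bigD1 (kap r u)) //= eqxx big1 //.
by move=> j; rewrite eq_sym => /negbTE ->.
Qed.

Lemma big_kap_Tcount v (F : 'I_K -> R) (h : history U K) :
  \sum_(r <- h) F (kap r v) = \sum_j F j * (Tcount v j h)%:R.
Proof.
elim: h => [|r h IH]; first by rewrite big_nil big1 // => j _; rewrite mulr0.
rewrite big_cons IH /Tcount /=.
under [RHS]eq_bigr do rewrite natrD mulrDr.
rewrite big_split /=; congr (_ + _).
rewrite (bigD1 (kap r v)) //= eqxx mulr1 big1 ?addr0 // => j.
by rewrite eq_sym => /negbTE ->; rewrite mulr0.
Qed.

End Kernel.

(** * Divergence decomposition *)

Lemma ln_prod (R : realType) (I : Type) (s : seq I) (F : I -> R) :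
  (forall i, 0 < F i) -> ln (\prod_(i <- s) F i) = \sum_(i <- s) ln (F i).
Proof.
move=> F0; elim: s => [|i s IH]; first by rewrite !big_nil ln1.
by rewrite !big_cons lnM ?IH // posrE // prodr_gt0.
Qed.

Section Divergence.
Context {R : realType} {U K : nat} {lam : 'I_U -> R} { pi : policy R U K }.
Hypothesis hpi : valid_policy pi.
Hypothesis hlam : forall u, 0 <= lam u <= 1.
Variables mu mu' : 'I_U -> 'I_K -> R.
Hypothesis hmu : forall u k, 0 <= mu u k <= 1.
Hypothesis hmu' : forall u k, 0 <= mu' u k <= 1.
Hypothesis abs_cont : forall v j b, 0 < bern (mu v j) b -> 0 < bern (mu' v j) b.

Definition llr (r : rec U K) :=
  \sum_v ln (bern (mu v (kap r v)) (obs r v) / bern (mu' v (kap r v)) (obs r v)).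

Lemma expect_step_llr h :
  \sum_(r : rec U K) step lam mu pi h r * llr r =
  \sum_(r : rec U K) step lam mu pi h r * \sum_v KL (mu v (kap r v)) (mu' v (kap r v)).
Proof.
pose G f o := \sum_v ln (bern (mu v (f v)) (o v) / bern (mu' v (f v)) (o v)).
pose G' (f : sched U K) (o : {ffun 'I_U -> bool}) := \sum_v KL (mu v (f v)) (mu' v (f v)).
rewrite (sum_step_kap_obs mu h G) (sum_step_kap_obs mu h G').
apply: eq_bigr => f _; congr (_ * _); rewrite -big_distrl /= sum_obs_prob mul1r.
under eq_bigr do rewrite big_distrr /=.
rewrite exchange_big; apply: eq_bigr => v _.
rewrite /obs_prob (sum_ffun_prod_marginal (fun u => bern (mu u (f u))) v
  (fun b => ln (bern (mu v (f v)) b / bern (mu' v (f v)) b))).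
by rewrite sum_bern_ln_ratio big1 ?mulr1 // => w _; apply: sum_bern.
Qed.

Lemma obs_prob_factor_gt0 (m : 'I_U -> 'I_K -> R) f o :
  (forall u k, 0 <= m u k <= 1) ->
  0 < obs_prob m f o -> forall u, 0 < bern (m u (f u)) (o u).
Proof.
move=> hm; rewrite lt0r => /andP[/prodf_neq0 o0 _] u.
by rewrite lt0r o0 ?bern_ge0.
Qed.

(* The policy and arrival factors of a slot cancel in the likelihood ratio. *)
Lemma step_ratio h r : 0 < step lam mu pi h r ->
  [/\ 0 < step lam mu' pi h r, 0 < obs_prob mu (kap r) (obs r),
      0 < obs_prob mu' (kap r) (obs r) &
      step lam mu pi h r / step lam mu' pi h r =
      obs_prob mu (kap r) (obs r) / obs_prob mu' (kap r) (obs r)].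
Proof.
have hpa : 0 <= pi h (kap r) * \prod_u bern (lam u) (arr r u).
  by rewrite mulr_ge0 ?prodr_ge0 //; [case: hpi | move=> u _; apply: bern_ge0].
rewrite /step -/(obs_prob mu _ _) -/(obs_prob mu' _ _).
rewrite mulr_ge0_gt0 ?prodr_ge0 // => [/andP[pa0 o0]|u _]; last exact: bern_ge0.
have o0' : 0 < obs_prob mu' (kap r) (obs r).
  by apply: prodr_gt0 => u _; apply/abs_cont/(obs_prob_factor_gt0 hmu o0).
split; [exact: mulr_gt0 | by [] | by [] |].
by rewrite invfM mulrACA divff ?gt_eqF // mul1r.
Qed.

Lemma hprob_abs_cont h : 0 < hprob lam mu pi h -> 0 < hprob lam mu' pi h.
Proof.
elim: h => [|r h IH] //=.
rewrite mulr_ge0_gt0 ?hprob_ge0 ?step_ge0 // => /andP[/IH p0 /step_ratio[s0 _ _ _]].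
exact: mulr_gt0.
Qed.

Lemma ln_hprob_ratio h : 0 < hprob lam mu pi h ->
  ln (hprob lam mu pi h / hprob lam mu' pi h) = \sum_(r <- h) llr r.
Proof.
elim: h => [|r h IH] /=; first by rewrite big_nil divr1 ln1.
rewrite mulr_ge0_gt0 ?hprob_ge0 ?step_ge0 // => /andP[p0 s0].
have [s0' o0 o0' sratio] := step_ratio s0.
have -> : hprob lam mu pi h * step lam mu pi h r / (hprob lam mu' pi h * step lam mu' pi h r)
  = hprob lam mu pi h / hprob lam mu' pi h * (step lam mu pi h r / step lam mu' pi h r).
  by rewrite invfM mulrACA.
rewrite sratio lnM; last 2 first.
- by rewrite posrE divr_gt0 ?hprob_abs_cont.
- by rewrite posrE divr_gt0.
rewrite IH // big_cons addrC /obs_prob -prodf_div ln_prod // => u.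
by rewrite divr_gt0 // (obs_prob_factor_gt0 _ o0, obs_prob_factor_gt0 _ o0').
Qed.

Lemma divergence_decomposition t :
  \sum_(h : t.-tuple (rec U K)) hprob lam mu pi h * ln (hprob lam mu pi h / hprob lam mu' pi h)
  = \sum_v \sum_j KL (mu v j) (mu' v j) * ET lam mu pi t v j.
Proof.
transitivity (\sum_(h : t.-tuple (rec U K)) hprob lam mu pi h * \sum_(r <- h) llr r).
  apply: eq_bigr => h _; have := hprob_ge0 hpi hlam hmu h.
  by rewrite le0r => /orP[/eqP ->|/ln_hprob_ratio ->]; rewrite ?mul0r.
rewrite (expect_additive_eq hpi expect_step_llr).
under eq_bigr do rewrite exchange_big big_distrr /=.
rewrite exchange_big; apply: eq_bigr => v _.
under eq_bigr do rewrite (big_kap_Tcount v (fun j => KL (mu v j) (mu' v j))) big_distrr /=.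
rewrite exchange_big; apply: eq_bigr => j _.
by rewrite /ET big_distrr; apply: eq_bigr => h _; rewrite mulrCA.
Qed.

End Divergence.

(** * Inequalities for the binary relative entropy *)

Section LogInequalities.
Variable R : realType.
Implicit Types p q r x : R.

Lemma ln_le_subr1 x : 0 < x -> ln x <= x - 1.
Proof. by move=> x0; have := @le_ln1Dx R (x - 1); rewrite subrKC; apply; lra. Qed.

Lemma mulr_ln_div_ge p q r : 0 <= p -> 0 <= q -> (0 < p -> 0 < q) -> 0 < r ->
  p * ln r + p - q * r <= p * ln (p / q).
Proof.
move=> p0 q0 pq r0; have [->|pn0] := eqVneq p 0.
  by rewrite !mul0r add0r subr_le0 mulr_ge0 // ltW.
have pp : 0 < p by rewrite lt0r pn0.
have qp := pq pp.
have := ln_le_subr1 (divr_gt0 (mulr_gt0 qp r0) pp).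
have qr0 : q * r \in Num.pos by rewrite posrE mulr_gt0.
rewrite !ln_div ?posrE // lnM ?posrE // => H.
have : p * (ln q + ln r - ln p) <= p * (q * r / p - 1) by rewrite ler_pM2l.
have -> : p * (q * r / p - 1) = q * r - p by field; rewrite gt_eqF.
lra.
Qed.

Lemma subr_le_mulr_ln_div p q : 0 <= p -> 0 <= q -> (0 < p -> 0 < q) ->
  p - q <= p * ln (p / q).
Proof.
by move=> p0 q0 pq; have := mulr_ln_div_ge p0 q0 pq ltr01; rewrite ln1 mulr0 mulr1 add0r.
Qed.

Lemma log_sum_inequality (I : finType) (P : pred I) (p q : I -> R) :
  (forall i, 0 <= p i) -> (forall i, 0 <= q i) -> (forall i, 0 < p i -> 0 < q i) ->
  (\sum_(i | P i) p i) * ln ((\sum_(i | P i) p i) / (\sum_(i | P i) q i))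
    <= \sum_(i | P i) p i * ln (p i / q i).
Proof.
move=> p0 q0 pq; set Sp := \sum_(i | P i) p i; set Sq := \sum_(i | P i) q i.
have [Sp_eq0|Sp_neq0] := eqVneq Sp 0.
  rewrite Sp_eq0 mul0r; apply: sumr_ge0 => i Pi.
  by move/psumr_eq0P: Sp_eq0 => /(_ (fun i _ => p0 i)) ->; rewrite ?mul0r.
have Spp : 0 < Sp by rewrite lt0r Sp_neq0 sumr_ge0.
have Sqp : 0 < Sq.
  have [i Pi pi0] : exists2 i, P i & 0 < p i.
    apply/exists_inP; apply: contraNT Sp_neq0 => /exists_inPn pn0.
    by apply/eqP/big1 => i Pi; apply/eqP; rewrite eq_le p0 andbT leNgt pn0.
  by apply: lt_le_trans (pq _ pi0) _; rewrite [leRHS](bigD1 i) //= lerDl sumr_ge0.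
have ratio0 : 0 < Sp / Sq by apply: divr_gt0.
apply: le_trans (ler_sum _ (fun i _ => mulr_ln_div_ge (p0 i) (q0 i) (@pq i) ratio0)).
rewrite big_split big_split /= sumrN -!big_distrl /= -/Sp -/Sq [Sq * _]mulrC divfK ?gt_eqF //.
lra.
Qed.

Lemma log_sum_inequality2 p1 p2 q1 q2 :
  0 <= p1 -> 0 <= p2 -> 0 <= q1 -> 0 <= q2 -> (0 < p1 -> 0 < q1) -> (0 < p2 -> 0 < q2) ->
  (p1 + p2) * ln ((p1 + p2) / (q1 + q2)) <= p1 * ln (p1 / q1) + p2 * ln (p2 / q2).
Proof.
move=> *; pose p i := if i == ord0 :> 'I_2 then p1 else p2.
pose q i := if i == ord0 :> 'I_2 then q1 else q2.
have := @log_sum_inequality _ xpredT p q.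
by rewrite !big_ord_recr !big_ord0 /= !add0r; apply => i; rewrite /p /q; case: ifP.
Qed.

Lemma KL_ge0 p q : 0 <= p <= 1 -> 0 < q < 1 -> 0 <= KL p q.
Proof.
move=> /andP[p0 p1] /andP[q0 q1].
have := @subr_le_mulr_ln_div p q p0 (ltW q0) (fun _ => q0).
have := @subr_le_mulr_ln_div (1 - p) (1 - q) ltac:(lra) ltac:(lra) (fun _ => ltac:(lra)).
rewrite /KL; lra.
Qed.

Lemma mulr_ln_div_scale c p x : 0 <= c -> 0 < x ->
  c * p * ln (c * p / (c * x)) = c * (p * ln (p / x)).
Proof.
move=> c0 x0; have [->|cn0] := eqVneq c 0; first by rewrite !mul0r.
by rewrite -mulf_div divff // mul1r mulrA.
Qed.

Lemma KL_convex_left th a b x : 0 <= th <= 1 -> 0 <= a <= 1 -> 0 <= b <= 1 -> 0 < x < 1 ->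
  KL (th * a + (1 - th) * b) x <= th * KL a x + (1 - th) * KL b x.
Proof.
move=> /andP[th0 th1] /andP[a0 a1] /andP[b0 b1] /andP[x0 x1].
have split_x (y : R) : th * y + (1 - th) * y = y by ring.
have split_1 : th * (1 - a) + (1 - th) * (1 - b) = 1 - (th * a + (1 - th) * b) by ring.
have := @log_sum_inequality2 (th * a) ((1 - th) * b) (th * x) ((1 - th) * x)
  ltac:(nra) ltac:(nra) ltac:(nra) ltac:(nra) (fun _ => ltac:(nra)) (fun _ => ltac:(nra)).
have := @log_sum_inequality2 (th * (1 - a)) ((1 - th) * (1 - b)) (th * (1 - x))
  ((1 - th) * (1 - x)) ltac:(nra) ltac:(nra) ltac:(nra) ltac:(nra)
  (fun _ => ltac:(nra)) (fun _ => ltac:(nra)).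
rewrite (split_x x) (split_x (1 - x)) split_1 !mulr_ln_div_scale /KL; lra.
Qed.

Lemma KL_nonincr_left p0 p x : 0 <= p0 -> p0 <= p -> p < x -> x < 1 ->
  KL p x <= KL p0 x.
Proof.
move=> p00 p0p px x1.
pose th := (x - p) / (x - p0).
have th0 : 0 <= th by apply: divr_ge0; lra.
have th1 : th <= 1 by rewrite ler_pdivrMr; lra.
have -> : p = th * p0 + (1 - th) * x by rewrite /th; field; lra.
apply: le_trans (KL_convex_left _ _ _ _) _; rewrite ?th0 ?th1 //; try lra.
have := @KL_ge0 p0 x ltac:(lra) ltac:(lra).
rewrite KLxx; nra.
Qed.

(* The Garivier--Menard--Stoltz bound, with the constant [ln 2] weakened to [2]. *)
Lemma KL_ge_ln_inv p q : 0 <= p <= 1 -> 0 <= q <= 1 ->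
  (0 < p -> 0 < q) -> (0 < 1 - p -> 0 < 1 - q) ->
  (1 - p) * ln (1 / (1 - q)) - 2 <= KL p q.
Proof.
move=> /andP[p0 p1] /andP[q0 q1] pq pq'.
have := subr_le_mulr_ln_div p0 q0 pq.
have [p_eq1|p_neq1] := eqVneq p 1.
  by rewrite /KL p_eq1 subrr !mul0r; lra.
have pp : 0 < 1 - p by rewrite subr_gt0 lt_neqAle p_neq1.
have qq := pq' pp.
have := @subr_le_mulr_ln_div (1 - p) 1 (ltW pp) ler01 (fun _ => ltr01).
rewrite /KL; have -> : (1 - p) / (1 - q) = (1 - p) * (1 / (1 - q)) by rewrite mul1r.
rewrite divr1 (@lnM _ (1 - p)) ?posrE ?divr_gt0 //; lra.
Qed.

End LogInequalities.

(** * Change of measure *)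

Definition Pr (R : realType) (U K : nat) (lam : 'I_U -> R) (mu : 'I_U -> 'I_K -> R)
    (pi : policy R U K) t (A : pred (t.-tuple (rec U K))) : R :=
  \sum_(h | A h) hprob lam mu pi h.

Definition served_half (U K : nat) t (u : 'I_U) (k : 'I_K) : pred (t.-tuple (rec U K)) :=
  fun h => (t <= 2 * Tcount u k h)%N.
Arguments served_half {U K} t u k.

Section Events.
Context {R : realType} {U K : nat} {lam : 'I_U -> R} { pi : policy R U K }.
Hypothesis hpi : valid_policy pi.
Hypothesis hlam : forall u, 0 <= lam u <= 1.

Lemma Pr_ge0 mu t (A : pred (t.-tuple (rec U K))) :
  (forall u k, 0 <= mu u k <= 1) -> 0 <= Pr lam mu pi A.
Proof. by move=> hmu; apply: sumr_ge0 => h _; apply: hprob_ge0. Qed.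

Lemma PrC mu t (A : pred (t.-tuple (rec U K))) :
  Pr lam mu pi (predC A) = 1 - Pr lam mu pi A.
Proof. by rewrite /Pr -(sum_hprob (lam:=lam) hpi mu t) [in RHS](bigID A) /=; lra. Qed.

Lemma Pr_le1 mu t (A : pred (t.-tuple (rec U K))) :
  (forall u k, 0 <= mu u k <= 1) -> Pr lam mu pi A <= 1.
Proof. by move=> hmu; have := Pr_ge0 (predC A) hmu; rewrite PrC subr_ge0. Qed.

Lemma markov_Pr mu t (A : pred (t.-tuple (rec U K))) (X : t.-tuple (rec U K) -> R) c :
  (forall u k, 0 <= mu u k <= 1) -> 0 < c -> (forall h, 0 <= X h) ->
  (forall h, A h -> c <= X h) ->
  Pr lam mu pi A <= (\sum_(h : t.-tuple (rec U K)) hprob lam mu pi h * X h) / c.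
Proof.
move=> hmu c0 X0 cX; rewrite ler_pdivlMr // /Pr big_distrl /=.
apply: le_trans (_ : \sum_(h | A h) hprob lam mu pi h * X h <= _).
  by apply: ler_sum => h Ah; rewrite ler_wpM2l ?hprob_ge0 ?cX.
rewrite [leRHS](bigID A) /= lerDl; apply: sumr_ge0 => h _.
by rewrite mulr_ge0 ?hprob_ge0.
Qed.

Section TwoInstances.
Variables mu mu' : 'I_U -> 'I_K -> R.
Hypothesis hmu : forall u k, 0 <= mu u k <= 1.
Hypothesis hmu' : forall u k, 0 <= mu' u k <= 1.
Hypothesis abs_cont : forall v j b, 0 < bern (mu v j) b -> 0 < bern (mu' v j) b.

Lemma Pr_abs_cont t (A : pred (t.-tuple (rec U K))) :
  0 < Pr lam mu pi A -> 0 < Pr lam mu' pi A.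
Proof.
rewrite /Pr => PA.
have [h /andP[Ah hp]|none] := pickP [pred h | A h && (0 < hprob lam mu pi h)].
  apply: lt_le_trans (hprob_abs_cont hpi hlam hmu abs_cont hp) _.
  by rewrite (bigD1 h) //= lerDl sumr_ge0 // => h' _; apply: hprob_ge0.
move: PA; rewrite lt0r => /andP[/negP[]]; apply/eqP/big1 => h Ah.
apply/eqP; rewrite eq_le hprob_ge0 // andbT leNgt.
by have := none h; rewrite /= Ah /= => ->.
Qed.

(* The data-processing inequality for the two-cell partition {A, ~A}. *)
Lemma KL_Pr_le t (A : pred (t.-tuple (rec U K))) :
  KL (Pr lam mu pi A) (Pr lam mu' pi A) <=
  \sum_(h : t.-tuple (rec U K)) hprob lam mu pi h * ln (hprob lam mu pi h / hprob lam mu' pi h).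
Proof.
have LS (P : pred (t.-tuple (rec U K))) :=
  log_sum_inequality P (p := fun h => hprob lam mu pi h) (q := fun h => hprob lam mu' pi h)
    (hprob_ge0 hpi hlam hmu) (hprob_ge0 hpi hlam hmu') (hprob_abs_cont hpi hlam hmu abs_cont).
by rewrite /KL -!PrC [leRHS](bigID A) lerD ?LS.
Qed.

Lemma change_of_measure t (A : pred (t.-tuple (rec U K))) :
  (1 - Pr lam mu pi A) * ln (1 / Pr lam mu' pi (predC A)) - 2 <=
  \sum_v \sum_j KL (mu v j) (mu' v j) * ET lam mu pi t v j.
Proof.
rewrite -(divergence_decomposition hpi hlam hmu hmu' abs_cont) PrC.
apply: le_trans (KL_Pr_le A); apply: KL_ge_ln_inv.
- by rewrite Pr_ge0 ?Pr_le1.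
- by rewrite Pr_ge0 ?Pr_le1.
- exact: Pr_abs_cont.
- by rewrite -!PrC; apply: Pr_abs_cont.
Qed.

End TwoInstances.

Lemma expect_sum_Tcount mu t u (S : pred 'I_K) :
  \sum_(h : t.-tuple (rec U K)) hprob lam mu pi h * (\sum_(j | S j) Tcount u j h)%:R =
  \sum_(j | S j) ET lam mu pi t u j.
Proof.
under eq_bigr do rewrite natr_sum big_distrr /=.
by rewrite exchange_big.
Qed.

Section Halves.
Variables (mu : 'I_U -> 'I_K -> R) (t : nat) (u : 'I_U) (k : 'I_K).
Hypothesis hmu : forall u k, 0 <= mu u k <= 1.
Hypothesis t_gt0 : (0 < t)%N.

Lemma Pr_served_half : Pr lam mu pi (served_half t u k) <= 2 / t%:R * ET lam mu pi t u k.
Proof.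
have t0 : 0 < t%:R / 2 :> R by rewrite divr_gt0 ?ltr0n.
rewrite mulrC -[2 / _]invf_div.
apply: markov_Pr => // h; rewrite /served_half -(ler_nat R) natrM.
lra.
Qed.

Lemma Pr_not_served_half :
  Pr lam mu pi (predC (served_half t u k)) <= 2 / t%:R * \sum_(j | j != k) ET lam mu pi t u j.
Proof.
have t0 : 0 < t%:R / 2 :> R by rewrite divr_gt0 ?ltr0n.
rewrite mulrC -[2 / _]invf_div -expect_sum_Tcount.
apply: markov_Pr => // h; rewrite /= /served_half -ltnNge -(ltr_nat R) natrM.
have := sum_Tcount u h; rewrite size_tuple (bigD1 k) //= => /(congr1 (fun n => n%:R : R)).
rewrite natrD; lra.
Qed.

End Halves.

End Events.

(** * The lower bound from consistency *)

Lemma ln_inv_ge_of_small_errors (R : realType) (alpha t c c' a b : R) :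
  0 < alpha < 1 -> 1 <= t -> 0 <= c -> 1 <= c' -> 0 <= a <= 1 ->
  a <= 2 / t * (c * t `^ alpha) -> (a < 1 -> 0 < b) -> b <= 2 / t * (c' * t `^ alpha) ->
  (1 - alpha) * ln t - (ln (2 * c') + 2 * c) <= (1 - a) * ln (1 / b).
Proof.
move=> /andP[al0 al1] t1 c0 c'1 /andP[a0 a1] ha hb0 hb.
have t0 : 0 < t by lra.
have ta0 : 0 < t `^ alpha by apply: powR_gt0.
have tb0 : 0 < t `^ (1 - alpha) by apply: powR_gt0.
have split_t : t `^ alpha * t `^ (1 - alpha) = t.
  rewrite -powRD; last by apply/implyP => _; rewrite gt_eqF.
  by rewrite addrC subrK powRr1 // ltW.
have large_b : (1 - a) * ((1 - alpha) * ln t - ln (2 * c')) <= (1 - a) * ln (1 / b).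
  have [->|a_neq1] := eqVneq a 1; first by rewrite subrr !mul0r.
  have a_lt1 : a < 1 by rewrite lt_neqAle a_neq1.
  have b0 := hb0 a_lt1.
  rewrite ler_wpM2l ?subr_ge0 //.
  have -> : (1 - alpha) * ln t - ln (2 * c') = ln (t / (2 * c' * t `^ alpha)).
    rewrite ln_div ?lnM ?posrE ?mulr_gt0 // ?ln_powR; lra.
  rewrite ler_ln ?posrE ?divr_gt0 ?mulr_gt0 //; try lra.
  by rewrite -[t / _]invf_div div1r lef_pV2 ?posrE ?divr_gt0 ?mulr_gt0 //; lra.
have small_a : a * ((1 - alpha) * ln t) <= 2 * c.
  have ln_le : (1 - alpha) * ln t <= t `^ (1 - alpha).
    by rewrite -ln_powR; apply/ltW/ln_sublinear.
  apply: le_trans (_ : 2 / t * (c * t `^ alpha) * t `^ (1 - alpha) <= _).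
    by apply: ler_pM => //; apply: mulr_ge0; [lra | apply: ln_ge0].
  have -> : 2 / t * (c * t `^ alpha) * t `^ (1 - alpha)
           = 2 * c * (t `^ alpha * t `^ (1 - alpha)) / t by ring.
  by rewrite split_t mulfK ?gt_eqF.
have : 0 <= a * ln (2 * c') by apply: mulr_ge0 => //; apply: ln_ge0; lra.
lra.
Qed.

Section Consistency.
Context {R : realType} {U K : nat} {lam : 'I_U -> R} { pi : policy R U K }.
Hypothesis hpi : valid_policy pi.
Variable alpha : R.
Hypothesis halpha : 0 < alpha < 1.
Hypothesis hcons : consistent alpha pi.

Lemma consistent_subopt_sum mu kstar : valid_instance lam mu -> unique_opt mu kstar ->
  forall u, exists c : R, exists t0 : nat, 1 <= c /\ forall t, (t0 <= t)%N ->
    \sum_(j | j != kstar u) ET lam mu pi t u j <= c * t%:R `^ alpha.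
Proof.
move=> vi uo u.
have /fin_all_exists [F HF] : forall j : 'I_K, exists p : R * nat, j != kstar u ->
    forall t, (p.2 <= t)%N -> ET lam mu pi t u j <= p.1 * t%:R `^ alpha.
  move=> j; have [->|hj] := eqVneq j (kstar u); first by exists (0, 0%N).
  by have [c [t0 H]] := hcons vi uo hj; exists (c, t0).
exists (\sum_j `|(F j).1| + 1), (\max_j (F j).2); split=> [|t ht].
  by rewrite lerDr sumr_ge0.
apply: le_trans (_ : \sum_(j | j != kstar u) `|(F j).1| * t%:R `^ alpha <= _).
  apply: ler_sum => j hj; apply: le_trans (HF j hj t _) _.
    exact: leq_trans (leq_bigmax j) ht.
  by rewrite ler_wpM2r ?powR_ge0 ?ler_norm.
rewrite -big_distrl ler_wpM2r ?powR_ge0 //.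
apply: le_trans (_ : \sum_j `|(F j).1| <= _); last by rewrite lerDl.
by rewrite [leRHS](bigID (fun j => j != kstar u)) /= lerDl sumr_ge0.
Qed.

Lemma consistency_lower_bound mu mu' kstar kstar' :
  valid_instance lam mu -> unique_opt mu kstar ->
  valid_instance lam mu' -> unique_opt mu' kstar' ->
  (forall v j b, 0 < bern (mu v j) b -> 0 < bern (mu' v j) b) ->
  forall u, kstar' u != kstar u ->
  exists M : R, exists t0 : nat, forall t : nat, (t0 <= t)%N ->
    (1 - alpha) * ln t%:R - M <= \sum_v \sum_j KL (mu v j) (mu' v j) * ET lam mu pi t v j.
Proof.
move=> vi uo vi' uo' ac u hk.
have [hlam [hmu _]] := vi; have [_ [hmu' _]] := vi'.
have [c [t0 [c1 Hc]]] := consistent_subopt_sum vi uo u.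
have [c' [t0' [c'1 Hc']]] := consistent_subopt_sum vi' uo' u.
exists (ln (2 * c') + 2 * c + 2), (maxn 1 (maxn t0 t0')) => t.
rewrite !geq_max => /and3P[t_gt0 tt0 tt0'].
pose A := served_half t u (kstar' u).
have := change_of_measure hpi hlam hmu hmu' ac A.
suff : (1 - alpha) * ln t%:R - (ln (2 * c') + 2 * c) <=
    (1 - Pr lam mu pi A) * ln (1 / Pr lam mu' pi (predC A)) by lra.
apply: ln_inv_ge_of_small_errors; rewrite ?ler1n ?Pr_ge0 ?Pr_le1 //; try lra.
- apply: le_trans (Pr_served_half hpi hlam _ _ hmu t_gt0) _.
  rewrite ler_wpM2l ?divr_ge0 ?ler0n //; apply: le_trans (Hc t tt0).
  rewrite (bigD1 (kstar' u)) //= lerDl sumr_ge0 // => j _.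
  exact: ET_ge0.
- by rewrite -subr_gt0 -(PrC hpi) => /(Pr_abs_cont hpi hlam hmu hmu' ac).
- apply: le_trans (Pr_not_served_half hpi hlam _ _ hmu' t_gt0) _.
  by rewrite ler_wpM2l ?divr_ge0 ?ler0n ?Hc'.
Qed.

End Consistency.

(** * Matchings *)

(* In a matching, a slot in which another queue holds server [c] is a slot in
   which [u] is served by a server other than [c]. *)
Lemma sum_served_by_others (U K : nat) (f : 'I_U -> 'I_K) u c : injective f ->
  (\sum_(w | w != u) (f w == c) <= \sum_(k | k != c) (f u == k))%N.
Proof.
move=> f_inj; have [fu_c|fu_c] := eqVneq (f u) c.
  rewrite big1 // => w wu; apply/eqP; rewrite eqb0 -fu_c.
  by apply: contra wu => /eqP/f_inj ->.
rewrite (bigD1 (f u)) //= eqxx; apply: leq_trans (leq_addr _ _).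
have [w /andP[wu fw_c]|none] := pickP [pred w | (w != u) && (f w == c)]; last first.
  by rewrite big1 // => w wu; have := none w; rewrite /= wu /= => ->.
rewrite (bigD1 w) //= fw_c big1 // => w' /andP[w'u w'w].
by apply/eqP; rewrite eqb0 -(eqP fw_c); apply: contra w'w => /eqP/f_inj ->.
Qed.

Lemma sum_Tcount_others_le (U K : nat) (h : history U K) u c :
  all (fun r => is_matching (kap r)) h ->
  (\sum_(w | w != u) Tcount w c h <= \sum_(k | k != c) Tcount u k h)%N.
Proof.
elim: h => [|r h IH] /=; first by rewrite !big1.
move=> /andP[/injectiveP r_inj /IH]; rewrite /Tcount /= !big_split /=.
exact/leq_add/sum_served_by_others.
Qed.

Section Matchings.
Context {R : realType} {U K : nat} {lam : 'I_U -> R} { pi : policy R U K }.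
Hypothesis hpi : valid_policy pi.
Hypothesis hlam : forall u, 0 <= lam u <= 1.
Variable mu : 'I_U -> 'I_K -> R.
Hypothesis hmu : forall u k, 0 <= mu u k <= 1.

Lemma hprob_matching h : 0 < hprob lam mu pi h -> all (fun r => is_matching (kap r)) h.
Proof.
elim: h => [|r h IH] //=.
rewrite mulr_ge0_gt0 ?hprob_ge0 ?step_ge0 // => /andP[/IH -> s0]; rewrite andbT.
apply: contraTT s0 => not_matching; rewrite /step.
by case: hpi => _ [_ ->] //; rewrite !mul0r ltxx.
Qed.

Lemma sum_ET_others_le t u c :
  \sum_(w | w != u) ET lam mu pi t w c <= \sum_(k | k != c) ET lam mu pi t u k.
Proof.
rewrite /ET exchange_big [leRHS]exchange_big /=.
apply: ler_sum => h _; rewrite -!big_distrr /=.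
have := hprob_ge0 hpi hlam hmu h; rewrite le0r => /orP[/eqP ->|hp]; first by rewrite !mul0r.
rewrite ler_wpM2l ?(ltW hp) // -!natr_sum ler_nat.
exact/sum_Tcount_others_le/hprob_matching.
Qed.

End Matchings.

Lemma ler_sum_subset (R : numDomainType) (I : finType) (P Q : pred I) (F : I -> R) :
  (forall i, P i -> Q i) -> (forall i, Q i -> 0 <= F i) ->
  \sum_(i | P i) F i <= \sum_(i | Q i) F i.
Proof.
move=> PQ F0; rewrite [leLHS]big_mkcond [leRHS]big_mkcond; apply: ler_sum => i _.
by have [/PQ ->|_] := boolP (P i); last by case: ifP => // /F0.
Qed.

Lemma sum_unmatched_add_matched_le (R : numDomainType) (U K : nat)
    (kstar : 'I_U -> 'I_K) (u : 'I_U) (F : 'I_K -> R) :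
  injective kstar -> (forall k, 0 <= F k) ->
  \sum_(k | [forall v, kstar v != k]) F k + \sum_(w | w != u) F (kstar w)
    <= \sum_(k | k != kstar u) F k.
Proof.
move=> kstar_inj F0; set img := kstar @: [set w | w != u].
have -> : \sum_(w | w != u) F (kstar w) = \sum_(k in img) F k.
  by rewrite big_imset /= => [|v w _ _ /kstar_inj //]; apply: eq_bigl => w; rewrite inE.
rewrite [leRHS](bigID (mem img)) /= addrC lerD //; apply: ler_sum_subset => // k.
- move=> /forallP unmatched; rewrite (eq_sym k) unmatched andTb.
  by apply/imsetP => -[w _ kw]; have := unmatched w; rewrite kw eqxx.
- case/imsetP=> w; rewrite inE => wu ->; rewrite mem_imset ?inE ?andbT //.
  by rewrite wu andbT; apply: contra wu => /eqP/kstar_inj ->.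
Qed.

(** * The alternative instance *)

Lemma lam_lt_opt (R : realType) (U K : nat) (lam : 'I_U -> R) (mu : 'I_U -> 'I_K -> R)
    (kstar : 'I_U -> 'I_K) :
  valid_instance lam mu -> unique_opt mu kstar -> forall u, lam u < mu u (kstar u).
Proof.
move=> [_ [_ [k0 [[k0_opt _] lam_lt]]]] [kstar_opt _] u.
have [<-|k0_neq] := eqVneq (k0 u) (kstar u); first exact: lam_lt.
have := k0_opt u (kstar u); rewrite eq_sym => /(_ k0_neq) lt1.
by have := lt_trans lt1 (kstar_opt u _ k0_neq); rewrite ltxx.
Qed.

(* Exchange servers [kstar u] and [k] in the optimal matching and give every
   pair that thereby becomes optimal the mean [x]. *)
Section AltInstance.
Context {R : realType} {U K : nat}.
Variables (lam : 'I_U -> R) (mu : 'I_U -> 'I_K -> R) (kstar : 'I_U -> 'I_K).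
Hypothesis hinst : valid_instance lam mu.
Hypothesis hopt : unique_opt mu kstar.
Variables (x : R) (u : 'I_U) (k : 'I_K).
Hypothesis mu_lt_x : forall v j, mu v j < x.
Hypothesis x_lt1 : x < 1.
Hypothesis hk : k != kstar u.

Definition alt_kstar v := tperm (kstar u) k (kstar v).

Definition alt_mu v j :=
  if (j == alt_kstar v) && (alt_kstar v != kstar v) then x else mu v j.

Lemma alt_kstar_u : alt_kstar u = k.
Proof. exact: tpermL. Qed.

Lemma alt_kstar_other v : v != u ->
  alt_kstar v = if kstar v == k then kstar u else kstar v.
Proof.
move=> vu; have kvu : kstar u != kstar v by apply: contra vu => /eqP/hopt.2 ->.
rewrite /alt_kstar; have [->|kvk] := eqVneq (kstar v) k; first exact: tpermR.
by rewrite tpermD // eq_sym.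
Qed.

Lemma alt_mu_off v j : j != alt_kstar v -> alt_mu v j = mu v j.
Proof. by rewrite /alt_mu => /negbTE ->. Qed.

Lemma alt_unique_opt : unique_opt alt_mu alt_kstar.
Proof.
split=> [v j hj|]; last by move=> v w /perm_inj /hopt.2.
rewrite alt_mu_off // /alt_mu eqxx /=.
have [moved|/negPn/eqP fixed] := boolP (alt_kstar v != kstar v); first exact: mu_lt_x.
by rewrite fixed; apply: hopt.1; rewrite -fixed.
Qed.

Lemma alt_valid_instance : valid_instance lam alt_mu.
Proof.
have [hlam [hmu _]] := hinst.
split=> //; split=> [v j|].
  rewrite /alt_mu; case: ifP => _ //; rewrite (ltW x_lt1) andbT.
  by apply: le_trans (ltW (mu_lt_x v j)); case/andP: (hmu v j).
exists alt_kstar; split; first exact: alt_unique_opt.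
move=> v; rewrite /alt_mu eqxx /=.
case: ifP => [_|/negbT/negPn/eqP ->]; last exact: lam_lt_opt hinst hopt v.
exact: lt_trans (lam_lt_opt hinst hopt v) (mu_lt_x _ _).
Qed.

Lemma alt_abs_cont v j b : 0 < bern (mu v j) b -> 0 < bern (alt_mu v j) b.
Proof.
have [_ [hmu _]] := hinst; have x0 : 0 < x.
  by apply: le_lt_trans (mu_lt_x v j); case/andP: (hmu v j).
by rewrite /alt_mu; case: ifP => // _ _; case: b; rewrite /= ?subr_gt0.
Qed.

Lemma alt_divergence_le (E : 'I_U -> 'I_K -> R) kap :
  (forall v j, KL (mu v j) x <= kap) -> (forall v j, 0 <= E v j) ->
  \sum_v \sum_j KL (mu v j) (alt_mu v j) * E v j <=
  kap * (E u k + \sum_(v | (v != u) && (kstar v == k)) E v (kstar u)).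
Proof.
move=> KL_le E0.
have row v : \sum_j KL (mu v j) (alt_mu v j) * E v j =
    if alt_kstar v != kstar v then KL (mu v (alt_kstar v)) x * E v (alt_kstar v) else 0.
  rewrite (bigD1 (alt_kstar v)) //= big1 ?addr0 => [|j hj]; last first.
    by rewrite alt_mu_off // KLxx mul0r.
  by rewrite /alt_mu eqxx /=; case: ifP => // _; rewrite KLxx mul0r.
under eq_bigr do rewrite row.
apply: le_trans (_ : \sum_v (if alt_kstar v != kstar v then kap * E v (alt_kstar v) else 0) <= _).
  by apply: ler_sum => v _; case: ifP => // _; rewrite ler_wpM2r.
rewrite (bigD1 u) //= alt_kstar_u hk mulrDr lerD2l big_mkcondr big_distrr /=.
apply: ler_sum => v vu; rewrite (alt_kstar_other vu).
by have [->|_] := eqVneq (kstar v) k; rewrite ?eqxx ?mulr0 // eq_sym hk.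
Qed.

End AltInstance.

Section InstanceConstants.
Context {R : realType} {U K : nat}.
Variable mu : 'I_U -> 'I_K -> R.

Lemma mu_max_ge v j : mu v j <= mu_max mu.
Proof.
apply: le_trans (le_bigmax 0 (fun k => mu v k) j) _.
exact: (le_bigmax 0 (fun v => \big[Num.max/0]_k mu v k) v).
Qed.

Lemma mu_max_ge0 : 0 <= mu_max mu.
Proof. exact: bigmax_ge_id. Qed.

Lemma mu_min_le v j : mu_min mu <= mu v j.
Proof.
apply: le_trans (bigmin_le 1 j (fun k => mu v k)).
exact: (bigmin_le 1 v (fun v => \big[Num.min/1]_k mu v k)).
Qed.

Lemma mu_min_le1 : mu_min mu <= 1.
Proof. exact: bigmin_le_id. Qed.

Lemma mu_min_ge0 : (forall v j, 0 <= mu v j <= 1) -> 0 <= mu_min mu.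
Proof.
move=> hmu; apply: le_bigmin => [|v _]; first exact: ler01.
by apply: le_bigmin => [|j _]; [exact: ler01 | case/andP: (hmu v j)].
Qed.

Lemma KL_min_mid_ge0 : (forall v j, 0 <= mu v j <= 1) -> mu_max mu < 1 ->
  0 <= KL (mu_min mu) ((mu_max mu + 1) / 2).
Proof.
move=> hmu m_lt1; apply: KL_ge0; first by rewrite mu_min_ge0 ?mu_min_le1.
by have := mu_max_ge0 => m0; apply/andP; split; lra.
Qed.

Lemma Delta_ge0 kstar : unique_opt mu kstar -> 0 <= Delta mu kstar.
Proof.
move=> [kstar_opt _]; apply: le_bigmin => [|v _]; first exact: ler01.
apply: le_bigmin => [|j hj]; first exact: ler01.
by rewrite subr_ge0 ltW // kstar_opt.
Qed.

End InstanceConstants.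

Section PairBound.
Context {R : realType} {U K : nat} {lam : 'I_U -> R} { pi : policy R U K }.
Hypothesis hpi : valid_policy pi.
Variable alpha : R.
Hypothesis halpha : 0 < alpha < 1.
Hypothesis hcons : consistent alpha pi.
Variables (mu : 'I_U -> 'I_K -> R) (kstar : 'I_U -> 'I_K).
Hypothesis hinst : valid_instance lam mu.
Hypothesis hopt : unique_opt mu kstar.
Hypothesis mu_max_lt1 : mu_max mu < 1.

Lemma pair_lower_bound : (0 < K)%N ->
  exists tau : nat, exists C : R, 0 < C /\ forall t : nat, (tau < t)%N ->
  forall u k, k != kstar u ->
  (1 - alpha) * ln t%:R - ln (4 * K%:R * C) <=
  KL (mu_min mu) ((mu_max mu + 1) / 2) *
    (ET lam mu pi t u k + \sum_(v | (v != u) && (kstar v == k)) ET lam mu pi t v (kstar u)).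
Proof.
move=> K_gt0; have [hlam [hmu _]] := hinst.
set x := (mu_max mu + 1) / 2; set kap := KL (mu_min mu) x.
have m_lt1 := mu_max_lt1.
have mu_lt_x v j : mu v j < x by have := mu_max_ge mu v j; rewrite /x; lra.
have x_lt1 : x < 1 by rewrite /x; lra.
have KL_le v j : KL (mu v j) x <= kap.
  exact: KL_nonincr_left (mu_min_ge0 hmu) (mu_min_le mu v j) (mu_lt_x v j) x_lt1.
have /fin_all_exists [G HG] : forall p : 'I_U * 'I_K, exists Mt : R * nat,
    p.2 != kstar p.1 -> forall t, (Mt.2 <= t)%N ->
    (1 - alpha) * ln t%:R - Mt.1 <= kap * (ET lam mu pi t p.1 p.2 +
      \sum_(v | (v != p.1) && (kstar v == p.2)) ET lam mu pi t v (kstar p.1)).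
  move=> [u k] /=; have [_|hk] := eqVneq k (kstar u); first by exists (0, 0%N).
  have moved : alt_kstar kstar u k u != kstar u by rewrite alt_kstar_u.
  have [M [t0 HM]] := consistency_lower_bound hpi halpha hcons hinst hopt
    (alt_valid_instance hinst hopt u k mu_lt_x x_lt1) (alt_unique_opt hopt u k mu_lt_x)
    (alt_abs_cont kstar hinst u k mu_lt_x x_lt1) moved.
  exists (M, t0) => _ t /HM; move/le_trans; apply.
  apply: (alt_divergence_le (E := fun v j => ET lam mu pi t v j) hopt hk KL_le) => v j.
  exact: ET_ge0.
pose M := \sum_p `|(G p).1|.
have K4_gt0 : 0 < 4 * K%:R :> R by rewrite mulr_gt0 ?ltr0n.
exists (\max_p (G p).2), (expR M / (4 * K%:R)); split; first by rewrite divr_gt0 ?expR_gt0.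
move=> t ht u k hk; rewrite [_ * (expR M / _)]mulrC divfK ?gt_eqF // expRK.
apply: le_trans (HG (u, k) hk t _); last exact: leq_trans (leq_bigmax (u, k)) (ltnW ht).
rewrite lerD2l lerN2; apply: le_trans (ler_norm _) _.
by rewrite /M (bigD1 (u, k)) //= lerDl sumr_ge0.
Qed.

End PairBound.

(** * Summing the pairwise bounds *)

Lemma sumr_const_pred (R : pzSemiRingType) (I : finType) (P : pred I) (c : R) :
  \sum_(i | P i) c = #|P|%:R * c.
Proof. by rewrite mulr_natl -sumr_const. Qed.

Section MatchingBounds.
Context {R : realType} {U K : nat}.
Variables (kstar : 'I_U -> 'I_K) (E : 'I_U -> 'I_K -> R) (L kap : R).
Hypothesis kstar_inj : injective kstar.
Hypothesis E_ge0 : forall u k, 0 <= E u k.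
Hypothesis kap_ge0 : 0 <= kap.
Hypothesis E_others_le : forall u c, \sum_(w | w != u) E w c <= \sum_(k | k != c) E u k.
Hypothesis pair_bound : forall u k, k != kstar u ->
  L <= kap * (E u k + \sum_(v | (v != u) && (kstar v == k)) E v (kstar u)).

Lemma card_unmatched : #|[pred k | [forall v, kstar v != k]]| = (K - U)%N.
Proof.
have := cardC [pred k | [forall v, kstar v != k]].
have -> : #|[predC [pred k | [forall v, kstar v != k]]]| = #|codom kstar|.
  apply: eq_card => k; rewrite !inE negb_forall.
  apply/existsP/codomP => [[v /negPn/eqP <-]|[v ->]]; first by exists v.
  by exists v; rewrite negbK.
by rewrite card_codom // !card_ord => /(canRL (addnK U)).
Qed.

Lemma unmatched_bound u : (K - U)%:R * L <= kap * \sum_(k | [forall v, kstar v != k]) E u k.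
Proof.
rewrite -card_unmatched -sumr_const_pred big_distrr; apply: ler_sum => k /forallP unmatched.
have := @pair_bound u k; rewrite eq_sym unmatched big1 ?addr0 //; first exact.
by move=> v /andP[_ /eqP kv]; have := unmatched v; rewrite kv eqxx.
Qed.

Lemma swap_bound u :
  (U - 1)%:R * L <= kap * \sum_(w | w != u) (E u (kstar w) + E w (kstar u)).
Proof.
have -> : (U - 1)%N = #|[pred w | w != u]| by rewrite cardC1 card_ord subn1.
rewrite -sumr_const_pred big_distrr; apply: ler_sum => w wu.
have kw_neq : kstar w != kstar u by apply: contra wu => /eqP/kstar_inj ->.
rewrite (le_trans (pair_bound kw_neq)) // (big_pred1 w) // => v /=.
by apply/andP/eqP => [[_ /eqP/kstar_inj]|->] //; rewrite wu eqxx.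
Qed.

Lemma queue_bound u : (U - 1)%:R * L <= kap * (2 * \sum_(k | k != kstar u) E u k).
Proof.
apply: le_trans (swap_bound u) _; rewrite ler_wpM2l // big_split /= mulr2n mulrDl mul1r.
apply: lerD; last exact: E_others_le.
apply: le_trans (sum_unmatched_add_matched_le u (F := E u) kstar_inj (E_ge0 u)).
by rewrite lerDr sumr_ge0.
Qed.

Lemma total_bound : (0 < U)%N -> (U <= K)%N ->
  (U * (K - 1))%:R * L <= kap * (2 * \sum_u \sum_(k | k != kstar u) E u k).
Proof.
move=> U_gt0 UK.
have -> : (U * (K - 1) = U * (K - U) + U * (U - 1))%N by rewrite -mulnDr; congr (_ * _); lia.
have sum_constU (X : R) : U%:R * X = \sum_(u : 'I_U) X by rewrite sumr_const card_ord mulr_natl.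
rewrite natrD !natrM mulrDl -!mulrA !sum_constU.
apply: le_trans (_ : kap * \sum_u \sum_(k | [forall v, kstar v != k]) E u k +
  kap * (\sum_u \sum_(w | w != u) E u (kstar w) + \sum_u \sum_(w | w != u) E w (kstar u))
  <= _).
  apply: lerD; first by rewrite big_distrr; apply: ler_sum => u _; apply: unmatched_bound.
  rewrite -big_split big_distrr; apply: ler_sum => u _.
  by rewrite -big_split; apply: swap_bound.
have swap_sym : \sum_u \sum_(w | w != u) E w (kstar u) = \sum_u \sum_(w | w != u) E u (kstar w).
  rewrite (exchange_big_dep xpredT) //=.
  by apply: eq_bigr => w _; apply: eq_bigl => v; rewrite eq_sym.
rewrite swap_sym -mulrDr ler_wpM2l //.
have := @ler_sum _ _ (index_enum 'I_U) xpredT _ _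
  (fun u _ => sum_unmatched_add_matched_le u kstar_inj (E_ge0 u)).
rewrite big_split /=.
have : 0 <= \sum_u \sum_(k | [forall v, kstar v != k]) E u k.
  by apply: sumr_ge0 => u _; apply: sumr_ge0.
lra.
Qed.

End MatchingBounds.

Lemma rescale_le (R : realFieldType) (c d k L S : R) : 0 <= d -> 0 <= k -> 0 <= S ->
  c * L <= k * S -> c * (d / k) * L <= d * S.
Proof.
move=> d0 k0 S0 cLkS; have [->|kn0] := eqVneq k 0; first by rewrite invr0 !mulr0 mul0r mulr_ge0.
have -> : c * (d / k) * L = d / k * (c * L) by ring.
have -> : d * S = d / k * (k * S) by rewrite mulrA divfK.
by rewrite ler_wpM2l ?divr_ge0.
Qed.

Unset Implicit Arguments.

Theorem corollary4 (R : realType) (U K : nat) (hU : (1 <= U)%N) (hUK : (U <= K)%N)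
    (lam : 'I_U -> R) (mu : 'I_U -> 'I_K -> R) (kstar : 'I_U -> 'I_K)
    (hinst : valid_instance lam mu) (hopt : unique_opt mu kstar)
    (alpha : R) (halpha : 0 < alpha < 1)
    (pi : policy R U K) (hpi : valid_policy pi) (hcons : consistent alpha pi) :
  exists (tau : nat) (C : R), 0 < C /\
  forall t : nat, (tau < t)%N ->
   let L := (1 - alpha) * ln (t%:R) - ln (4 * K%:R * C) in
   (* (a) *)
   (U * (K - 1))%:R * Dmu mu kstar * L
     <= 2 * Delta mu kstar *
        \sum_(u < U) \sum_(k < K | k != kstar u) ET lam mu pi t u k
   /\
   (* (b) *)
   (forall u : 'I_U,
     (U - 1)%:R * Dmu mu kstar * L
       <= 2 * Delta mu kstar * \sum_(k < K | k != kstar u) ET lam mu pi t u k)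
   /\
   (* (c) *)
   (forall u : 'I_U,
     (K - U)%:R * Dmu mu kstar * L
       <= Delta mu kstar *
          \sum_(k < K | [forall v : 'I_U, kstar v != k]) ET lam mu pi t u k).
Proof.
have [hlam [hmu _]] := hinst.
have D0 := Delta_ge0 hopt.
have ET0 t : forall u k, 0 <= ET lam mu pi t u k := ET_ge0 hpi hlam hmu t.
have sum_ET0 t u (P : pred 'I_K) : 0 <= \sum_(k | P k) ET lam mu pi t u k by apply: sumr_ge0.
case: (ltP (mu_max mu) 1) => [mu_max_lt1|mu_max_ge1]; last first.
  exists 0%N, 1; split=> // t _ L; rewrite /Dmu ltNge mu_max_ge1 /= !mulr0 !mul0r.
  by split; [|split=> u]; rewrite ?mulr_ge0 ?sumr_ge0.
have [tau [C [C0 pair]]] := pair_lower_bound hpi halpha hcons hinst hopt mu_max_lt1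
  (leq_trans hU hUK).
exists tau, C; split=> // t ht L; rewrite /Dmu mu_max_lt1.
have kap0 := KL_min_mid_ge0 hmu mu_max_lt1.
have E_others := sum_ET_others_le hpi hlam hmu t.
have pair_t := pair t ht.
split; [|split=> u].
- rewrite [2 * Delta _ _]mulrC -[leRHS]mulrA; apply: rescale_le => //.
    by apply: mulr_ge0 => //; apply: sumr_ge0 => v _; apply: sum_ET0.
  exact: total_bound hopt.2 (ET0 t) kap0 pair_t hU hUK.
- rewrite [2 * Delta _ _]mulrC -[leRHS]mulrA; apply: rescale_le; rewrite ?mulr_ge0 //.
  exact: queue_bound hopt.2 (ET0 t) kap0 E_others pair_t u.
- by apply: rescale_le => //; apply: unmatched_bound hopt.2 pair_t u.
Qed.
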